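(* Let $g,p,q$ be real univariate polynomials with $\deg(g)=m$, $\deg(p)=2d$ and $\deg(q)=2d-2m$, such that $p$ and $q$ are sums of squares and $g$ and $q$ are coprime. Then there exists a sum of squares polynomial $s\in\Sigma[x]_{2m}$ such that $p\equiv sq\pmod g$.
   Context: $\Sigma[x]_{2m}$ denotes the cone of real univariate polynomials of degree at most $2m$ that are sums of squares of real polynomials (of degree at most $m$). $a\equiv b\pmod g$ means $a=b+wg$ for some real polynomial $w$. Coprime means the greatest common divisor is a constant. *)

From HB Require Import structures.
From mathcomp Require Import all_boot all_order all_algebra.
From mathcomp Require Export reals.
Set Implicit Arguments. Unset Strict Implicit. Unset Printing Implicit Defensive.
Import Order.TTheory GRing.Theory Num.Theory.
Local Open Scope ring_scope.

Definition is_sos (R : realType) (p : {poly R}) : Prop :=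
  exists l : seq {poly R}, p = \sum_(h <- l) h ^+ 2.

Definition sos_deg (R : realType) (m : nat) (s : {poly R}) : Prop :=
  (size s <= (2 * m).+1)%N /\
  exists l : seq {poly R},
    all (fun h : {poly R} => (size h <= m.+1)%N) l /\ s = \sum_(h <- l) h ^+ 2.

From mathcomp Require Import all_boot all_order all_algebra.
From mathcomp Require Import reals.
From mathcomp Require Import ring zify.
Set Implicit Arguments. Unset Strict Implicit. Unset Printing Implicit Defensive.
Import Order.TTheory GRing.Theory Num.Theory.
Local Open Scope ring_scope.

(* Coprimality gives t with t q = 1 mod g, hence p = (p q t^2) q mod g.  The
   factor p q t^2 is a sum of squares of polynomials h; replacing each h by its
   remainder modulo g preserves the congruence and brings every h down to
   degree < m, so the new sum lies in Sigma[x]_{2m}. *)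

Lemma dvdp_sub_modp (F : fieldType) (g k : {poly F}) : g %| k - k %% g.
Proof. by rewrite {1}(divp_eq k g) addrK dvdp_mull. Qed.

Lemma dvdp_subX2_modp (F : fieldType) (g k : {poly F}) :
  g %| k ^+ 2 - (k %% g) ^+ 2.
Proof. by rewrite subr_sqr dvdp_mulr ?dvdp_sub_modp. Qed.

Lemma Bezout_dvdp_sub_sqr (F : fieldType) (g q u t p : {poly F}) :
  u * g + t * q = 1 -> g %| p - p * q * t ^+ 2 * q.
Proof.
move=> bez; have -> : p - p * q * t ^+ 2 * q = p * (1 + t * q) * (u * g).
  by rewrite -[u * g](addrK (t * q)) bez; ring.
by rewrite dvdp_mull // dvdp_mull.
Qed.

Lemma is_sos_sqr (R : realType) (t : {poly R}) : is_sos (t ^+ 2).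
Proof. by exists [:: t]; rewrite big_seq1. Qed.

Lemma is_sos_mul (R : realType) (p q : {poly R}) :
  is_sos p -> is_sos q -> is_sos (p * q).
Proof.
move=> [lp ->] [lq ->]; exists [seq f * h | f <- lp, h <- lq].
rewrite big_allpairs_dep mulr_suml; apply: eq_bigr => f _.
by rewrite mulr_sumr; apply: eq_bigr => h _; rewrite exprMn.
Qed.

Lemma size_sum_sqr_leq (R : nzRingType) (m : nat) (l : seq {poly R}) :
  all (fun h : {poly R} => (size h <= m.+1)%N) l ->
  (size (\sum_(h <- l) h ^+ 2)%R <= (2 * m).+1)%N.
Proof.
elim: l => [|h l IHl] /=; first by rewrite big_nil size_poly0.
move=> /andP[small_h small_l]; rewrite big_cons.
apply: leq_trans (size_polyD _ _) _; rewrite geq_max IHl // andbT.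
by apply: leq_trans (size_polyMleq _ _) _; move: small_h => /= small_h; lia.
Qed.

Lemma sos_deg_sum_sqr_modp (R : realType) (m : nat) (g : {poly R})
    (l : seq {poly R}) :
  size g = m.+1 -> sos_deg m (\sum_(h <- l) (h %% g) ^+ 2).
Proof.
move=> size_g; have g_neq0 : g != 0 by rewrite -size_poly_eq0 size_g.
have small : all (fun h : {poly R} => (size h <= m.+1)%N) [seq h %% g | h <- l].
  by rewrite all_map; apply/allP => h _ /=; rewrite -size_g ltnW ?ltn_modpN0.
rewrite -(big_map (fun h => h %% g) xpredT (fun h => h ^+ 2)).
by split; [exact: size_sum_sqr_leq | exists [seq h %% g | h <- l]].
Qed.

Lemma sos_reduce_modp (R : realType) (m : nat) (g r : {poly R}) :
  size g = m.+1 -> is_sos r -> exists2 s, sos_deg m s & g %| r - s.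
Proof.
move=> size_g [l ->]; exists (\sum_(h <- l) (h %% g) ^+ 2).
  exact: sos_deg_sum_sqr_modp.
rewrite -sumrB; apply: (big_ind (fun x => g %| x)); first exact: dvdp0.
  exact: dvdp_add.
by move=> h _; apply: dvdp_subX2_modp.
Qed.

Theorem lemma3p9 (R : realType) (m d : nat) (g p q : {poly R}) :
  (m <= d)%N ->
  size g = m.+1 ->
  size p = (2 * d).+1 ->
  size q = (2 * d - 2 * m).+1 ->
  is_sos p -> is_sos q ->
  coprimep g q ->
  exists s : {poly R}, sos_deg m s /\ exists w : {poly R}, p = s * q + w * g.
Proof.
move=> _ size_g _ _ sos_p sos_q /Bezout_eq1_coprimepP [[u t] /= bez].
have sos_pqt := is_sos_mul (is_sos_mul sos_p sos_q) (is_sos_sqr t).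
have [s sos_s dvd_g_s] := sos_reduce_modp size_g sos_pqt.
have dvd_g : g %| p - s * q.
  have -> : p - s * q = (p - p * q * t ^+ 2 * q) + (p * q * t ^+ 2 - s) * q.
    by ring.
  by rewrite dvdp_add ?dvdp_mulr ?(Bezout_dvdp_sub_sqr p bez).
exists s; split=> //; exists ((p - s * q) %/ g).
by rewrite divpK // addrC subrK.
Qed.
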